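(* Let $d\ge1$ and let $f$ be a Boolean function that is equivalent to a depth-$d$ decision tree and satisfies ${\rm psize}(f)=t\ge1$. Then some variable $x_i$ appears in at least $\lceil t/d\rceil$ monomials of the minimal polynomial representation of $f$.
   Context: Every Boolean function has a unique representation as a sum over $\mathbb{F}_2$ of distinct monomials (products of distinct variables, the empty product being the constant $1$). ${\rm psize}(f)$ is the number of non-constant monomials in this representation. A decision tree over $x_1,\dots,x_n$ is a rooted binary tree whose internal nodes are labeled by variables, each having a 0-child and a 1-child, leaves labeled $0$ or $1$; it computes a Boolean function by following from the root the $x_i$-child at a node labeled $x_i$; depth is the maximum number of edges on a root-to-leaf path. *)

From mathcomp Require Import all_boot.
Set Implicit Arguments. Unset Strict Implicit. Unset Printing Implicit Defensive.

(* Boolean functions on n variables x_0..x_{n-1}; an assignment is the set of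
   variables set to 1. *)
Definition assignment (n : nat) := {set 'I_n}.

(* A polynomial over F_2 with distinct multilinear monomials is a set of
   monomials, each monomial being the set of its variables (set0 = constant 1). *)
Definition f2poly (n : nat) := {set {set 'I_n}}.

Definition peval n (P : f2poly n) (x : assignment n) : bool :=
  odd #|[set S in P | S \subset x]|.

Definition represents n (P : f2poly n) (f : assignment n -> bool) : Prop :=
  forall x, peval P x = f x.

Definition psize_of n (P : f2poly n) : nat := #|P :\ set0|.

Inductive dtree (n : nat) : Type :=
| Leaf : bool -> dtree n
| Node : 'I_n -> dtree n -> dtree n -> dtree n. (* variable, 0-child, 1-child *)

Fixpoint dt_eval n (T : dtree n) (x : assignment n) : bool :=
  match T with
  | Leaf b => b
  | Node i T0 T1 => if i \in x then dt_eval T1 x else dt_eval T0 x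
  end.

Fixpoint dt_depth n (T : dtree n) : nat :=
  match T with
  | Leaf _ => 0
  | Node _ T0 T1 => (maxn (dt_depth T0) (dt_depth T1)).+1
  end.

From mathcomp Require Import all_boot.
From mathcomp Require Import zify.
Set Implicit Arguments. Unset Strict Implicit. Unset Printing Implicit Defensive.

(* Let Z be the set of variables queried along the all-zero path
   of a depth-d decision tree T, so #|Z| <= d.  Every assignment x with no
   variable of Z set to 1 follows that path, hence f x = f 0.
   (1) Every non-constant monomial of the F_2 representation of f meets Z:
       otherwise take an inclusion-minimal non-constant monomial S avoiding Z;
       at the assignment S exactly the constant monomial and S itself are
       satisfied, so f S <> f 0, although S avoids Z.
   (2) Hence the t non-constant monomials are covered by the sets
       A_j = {S in P | j in S}, j in Z, so t <= sum_(j in Z) #|A_j|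
       <= d * max_j #|A_j|, and the maximising variable lies in at least
       ceil(t/d) = (t + d - 1) / d monomials. *)

Fixpoint zero_path n (T : dtree n) : {set 'I_n} :=
  match T with
  | Leaf _ => set0
  | Node i T0 _ => i |: zero_path T0
  end.

Lemma card_zero_path n (T : dtree n) : #|zero_path T| <= dt_depth T.
Proof.
elim: T => [b|i T0 IH0 T1 _] /=; first by rewrite cards0.
by rewrite cardsU1 (leq_add (leq_b1 _)) // (leq_trans IH0) // leq_maxl.
Qed.

Lemma dt_eval_off_zero_path n (T : dtree n) (x : assignment n) :
  zero_path T \subset ~: x -> dt_eval T x = dt_eval T set0.
Proof.
elim: T => [b|i T0 IH0 T1 _] //=.
by rewrite subUset sub1set in_setC in_set0 => /andP [/negbTE -> /IH0].
Qed.

(* Evaluating a polynomial at the support of a monomial S which contains no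
   other non-constant monomial flips the value at the all-zero assignment:
   the satisfied monomials are S and possibly the constant one. *)
Lemma peval_minimal_monomial n (P : f2poly n) (S : {set 'I_n}) :
  S \in P -> S != set0 ->
  (forall U, U \in P -> U \subset S -> U != set0 -> U = S) ->
  peval P S = ~~ peval P set0.
Proof.
move=> SP S0 minS.
have at_zero : [set U in P | U \subset set0] = [set U in P | U == set0].
  by apply/setP => U; rewrite !inE subset0.
have at_S : [set U in P | U \subset S] = S |: [set U in P | U == set0].
  apply/setP => U; rewrite !inE; apply/andP/idP => [[UP US]|].
    case: (eqVneq U set0) => [_|U0]; first by rewrite UP orbT.
    by rewrite (minS U) ?eqxx.
  by case/orP => [/eqP ->|/andP [-> /eqP ->]]; rewrite ?SP ?sub0set.
have S_notin : S \notin [set U in P | U == set0] by rewrite inE (negbTE S0) andbF.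
by rewrite /peval at_S at_zero cardsU1 S_notin.
Qed.

Lemma monomial_meets n (P : f2poly n) (Z : {set 'I_n}) :
  (forall x, Z \subset ~: x -> peval P x = peval P set0) ->
  forall S, S \in P -> S != set0 -> ~~ (Z \subset ~: S).
Proof.
move=> constP S SP S0; apply/negP => ZS.
pose avoiding (U : {set 'I_n}) := [&& U \in P, U != set0 & Z \subset ~: U].
have avS : avoiding S by rewrite /avoiding SP S0.
case: (arg_minnP (fun U : {set 'I_n} => #|U|) avS) => M /and3P [MP M0 ZM] minM.
have minimal (U : {set 'I_n}) : U \in P -> U \subset M -> U != set0 -> U = M.
  move=> UP UM U0; apply/eqP; rewrite eqEcard UM minM //.
  by rewrite /avoiding UP U0 (subset_trans ZM) // setCS.
by move: (constP M ZM); rewrite (peval_minimal_monomial MP M0 minimal); case: peval.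
Qed.

Lemma card_bigcup_le (I T : finType) (Z : {set I}) (A : I -> {set T}) :
  #|\bigcup_(j in Z) A j| <= \sum_(j in Z) #|A j|.
Proof.
apply: (big_ind2 (fun (U : {set T}) m => #|U| <= m)); rewrite ?cards0 //.
by move=> U1 m1 U2 m2 H1 H2; apply: leq_trans (leq_card_setU _ _) (leq_add H1 H2).
Qed.

Lemma pigeonhole_cover (I T : finType) (Z : {set I}) (A : I -> {set T})
    (Q : {set T}) :
  0 < #|Z| -> Q \subset \bigcup_(j in Z) A j ->
  exists2 i, i \in Z & #|Q| <= #|Z| * #|A i|.
Proof.
move=> Z_gt0 QA; have [i iZ maxA] := eq_bigmax_cond (fun j => #|A j|) Z_gt0.
exists i => //; rewrite -maxA -sum_nat_const.
apply: leq_trans (subset_leq_card QA) (leq_trans (card_bigcup_le _ _) _).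
by apply: leq_sum => j jZ; apply: leq_bigmax_cond.
Qed.

Lemma ceil_div_le (t d m : nat) : 0 < d -> t <= d * m -> (t + d - 1) %/ d <= m.
Proof. by move=> d_gt0 tdm; rewrite -ltnS ltn_divLR // mulSnr mulnC; lia. Qed.

Theorem mainTheorem19 (n d t : nat) (f : assignment n -> bool)
    (T : dtree n) (P : f2poly n) :
  1 <= d ->
  dt_depth T = d ->
  (forall x, dt_eval T x = f x) ->
  represents P f ->
  psize_of P = t -> 1 <= t ->
  exists i : 'I_n, (t + d - 1) %/ d <= #|[set S in P | i \in S]|.
Proof.
move=> d_gt0 depthT Tf Pf sizeP t_gt0.
pose Z := zero_path T; pose A (j : 'I_n) := [set S in P | j \in S].
have constP x : Z \subset ~: x -> peval P x = peval P set0.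
  by move=> Zx; rewrite !Pf -!Tf dt_eval_off_zero_path.
have cover : P :\ set0 \subset \bigcup_(j in Z) A j.
  apply/subsetP => S; rewrite !inE => /andP [S0 SP].
  have /subsetPn [j jZ jS] := monomial_meets constP SP S0.
  by apply/bigcupP; exists j; rewrite // inE SP; move: jS; rewrite in_setC negbK.
have Z_gt0 : 0 < #|Z|.
  rewrite lt0n; apply: contraTneq t_gt0 => /cards0_eq Z0.
  by move: cover; rewrite -sizeP /psize_of Z0 big_set0 subset0 => /eqP ->; rewrite cards0.
have [i _ bound] := pigeonhole_cover Z_gt0 cover.
exists i; apply: ceil_div_le => //.
by rewrite -sizeP (leq_trans bound) // leq_mul2r -depthT card_zero_path orbT.
Qed.
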